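(* Let $C$ be a circle in the plane, let $p,r$ be points on $C$, and let $q$ be a point in the open disk bounded by $C$. Suppose the ordered triple $(p,q,r)$ makes a clockwise (resp. counterclockwise) turn. Let $\gamma$ be a simple piecewise-linear path that starts at $p$, passes through $q$, ends at $r$, and meets $C$ only at $p$ and $r$. Then $\gamma$ has at least one clockwise (resp. counterclockwise) vertex, i.e. a vertex at which the path turns clockwise (resp. counterclockwise). *)

From Stdlib Require Import Reals Lra List.
Import ListNotations.
Open Scope R_scope.

Definition point : Type := (R * R)%type.
Definition px (a : point) : R := fst a.
Definition py (a : point) : R := snd a.

(* Twice the signed area of the triangle (a,b,c):
   > 0 counterclockwise turn, < 0 clockwise turn, = 0 collinear. *)
Definition orient (a b c : point) : R :=
  (px b - px a) * (py c - py a) - (py b - py a) * (px c - px a).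

Definition cw_turn (a b c : point) : Prop := orient a b c < 0.
Definition ccw_turn (a b c : point) : Prop := orient a b c > 0.

Definition dist2 (a b : point) : R :=
  (px a - px b) ^ 2 + (py a - py b) ^ 2.

(* circle with center c and radius rho (rho > 0 assumed separately) *)
Definition on_circle (c : point) (rho : R) (x : point) : Prop :=
  dist2 x c = rho ^ 2.
Definition in_open_disk (c : point) (rho : R) (x : point) : Prop :=
  dist2 x c < rho ^ 2.

Definition on_segment (a b x : point) : Prop :=
  exists t : R, 0 <= t <= 1 /\
    x = (px a + t * (px b - px a), py a + t * (py b - py a)).

(* A piecewise-linear path is given by its list of vertices vs = [v_0; ...; v_{n-1}],
   n >= 2; its segments are [v_i, v_{i+1}] for i + 1 < n. *)
Definition vtx (vs : list point) (i : nat) : point := nth i vs (0, 0).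

Definition on_path (vs : list point) (x : point) : Prop :=
  exists i : nat, (S i < length vs)%nat /\ on_segment (vtx vs i) (vtx vs (S i)) x.

Definition simple_path (vs : list point) : Prop :=
  (2 <= length vs)%nat /\
  (forall i, (S i < length vs)%nat -> vtx vs i <> vtx vs (S i)) /\
  (forall i j x, (i < j)%nat -> (S j < length vs)%nat ->
     on_segment (vtx vs i) (vtx vs (S i)) x ->
     on_segment (vtx vs j) (vtx vs (S j)) x ->
     j = S i /\ x = vtx vs j).

Definition has_cw_vertex (vs : list point) : Prop :=
  exists i : nat, (0 < i)%nat /\ (S i < length vs)%nat /\
    cw_turn (vtx vs (pred i)) (vtx vs i) (vtx vs (S i)).
Definition has_ccw_vertex (vs : list point) : Prop :=
  exists i : nat, (0 < i)%nat /\ (S i < length vs)%nat /\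
    ccw_turn (vtx vs (pred i)) (vtx vs i) (vtx vs (S i)).

From Stdlib Require Import Reals Lra Lia Psatz Wf_nat Classical.
Open Scope R_scope.

(* The heart is the side property
   (side_property_holds), proved by strong induction on the number of vertices:
   if a simple path a = f 0, ..., f (n-1) = b with no clockwise vertex has a
   convex "window" K -- K contains all points of the path except a and b,
   excludes a and b, and is star-shaped from both -- then orient a x b >= 0 for
   every point x of the path.  If f 1 is a straight vertex it is removed.
   Otherwise the path turns strictly left at f 1; then (i) the induction
   hypothesis, applied to prefixes of the tail cut where they would reach the
   line f 0 f 1, shows that the tail f 1, ..., f (n-1) stays strictly left of
   that line; (ii) so the induction hypothesis applies to the tail with the
   window "K left of f 0 f 1"; and (iii) a triangle argument concludes.

   The open disk is convex and star-shaped from the points of its circle, and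
   since no segment of the path can cross the circle, every non-endpoint of the
   path lies in the open disk; so the disk is a window, which gives the
   clockwise half.  The counterclockwise half follows by reflecting the plane
   in the x-axis. *)


Lemma point_eq (x y : point) : px x = px y -> py x = py y -> x = y.
Proof. destruct x, y; unfold px, py; simpl; intros -> ->; reflexivity. Qed.

Definition lerp (u w : point) (t : R) : point :=
  (px u + t * (px w - px u), py u + t * (py w - py u)).

Lemma px_lerp u w t : px (lerp u w t) = px u + t * (px w - px u).
Proof. reflexivity. Qed.
Lemma py_lerp u w t : py (lerp u w t) = py u + t * (py w - py u).
Proof. reflexivity. Qed.

Ltac coords := apply point_eq; rewrite ?px_lerp, ?py_lerp.

Lemma segment_param u w x : on_segment u w x -> exists t, 0 <= t <= 1 /\ x = lerp u w t.
Proof. intros [t [Ht E]]. exists t. split; [exact Ht | exact E]. Qed.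

Lemma segment_at u w t : 0 <= t <= 1 -> on_segment u w (lerp u w t).
Proof. intros Ht. exists t. split; [exact Ht | reflexivity]. Qed.

Lemma lerp0 u w : lerp u w 0 = u.
Proof. coords; ring. Qed.
Lemma lerp1 u w : lerp u w 1 = w.
Proof. coords; ring. Qed.

Lemma segment_start u w : on_segment u w u.
Proof. pattern u at 2. rewrite <- (lerp0 u w). apply segment_at; lra. Qed.
Lemma segment_end u w : on_segment u w w.
Proof. pattern w at 2. rewrite <- (lerp1 u w). apply segment_at; lra. Qed.

Lemma lerp_inj u w t t' : u <> w -> lerp u w t = lerp u w t' -> t = t'.
Proof.
  intros Huw E.
  assert (Ex := f_equal px E). assert (Ey := f_equal py E).
  rewrite !px_lerp in Ex. rewrite !py_lerp in Ey.
  destruct (Req_dec (px w - px u) 0) as [Hx | Hx].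
  - destruct (Req_dec (py w - py u) 0) as [Hy | Hy].
    + exfalso. apply Huw. apply point_eq; lra.
    + apply Rmult_eq_reg_r with (py w - py u); lra.
  - apply Rmult_eq_reg_r with (px w - px u); lra.
Qed.

Lemma lerp_lerp u w t s : lerp u (lerp u w t) s = lerp u w (s * t).
Proof. coords; ring. Qed.

Lemma ratio_unit a b : 0 <= a <= b -> 0 < b -> 0 <= a / b <= 1.
Proof.
  intros Hab Hb. split.
  - unfold Rdiv. apply Rmult_le_pos; [lra | left; apply Rinv_0_lt_compat; lra].
  - apply Rmult_le_reg_r with b; [lra |]. field_simplify; lra.
Qed.

Lemma subsegment_left u w m x :
  0 <= m <= 1 -> on_segment u (lerp u w m) x -> on_segment u w x.
Proof.
  intros Hm Hx. destruct (segment_param _ _ _ Hx) as [s [Hs ->]].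
  rewrite lerp_lerp. apply segment_at. nra.
Qed.

Lemma subsegment_right u w m x :
  0 <= m <= 1 -> on_segment (lerp u w m) w x -> on_segment u w x.
Proof.
  intros Hm Hx. destruct (segment_param _ _ _ Hx) as [s [Hs ->]].
  replace (lerp (lerp u w m) w s) with (lerp u w (m + s * (1 - m))) by (coords; ring).
  apply segment_at. nra.
Qed.

Lemma segment_split u w m x : 0 < m < 1 -> on_segment u w x ->
  on_segment u (lerp u w m) x \/ on_segment (lerp u w m) w x.
Proof.
  intros Hm Hx. destruct (segment_param _ _ _ Hx) as [t [Ht ->]].
  destruct (Rle_lt_dec t m).
  - left. replace (lerp u w t) with (lerp u (lerp u w m) (t / m)) by (coords; field; lra).
    apply segment_at, ratio_unit; lra.
  - right.
    replace (lerp u w t) with (lerp (lerp u w m) w ((t - m) / (1 - m))) by (coords; field; lra).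
    apply segment_at, ratio_unit; lra.
Qed.

Lemma orient_lerp_l u w b c t :
  orient (lerp u w t) b c = (1 - t) * orient u b c + t * orient w b c.
Proof. unfold orient; rewrite px_lerp, py_lerp; ring. Qed.

Lemma orient_lerp_r a b u w t :
  orient a b (lerp u w t) = (1 - t) * orient a b u + t * orient a b w.
Proof. unfold orient; rewrite px_lerp, py_lerp; ring. Qed.

Lemma orient_lerp_m a u w c t :
  orient a (lerp u w t) c = (1 - t) * orient a u c + t * orient a w c.
Proof. unfold orient; rewrite px_lerp, py_lerp; ring. Qed.

Lemma orient_repeat_r a b : orient a b b = 0.
Proof. unfold orient; ring. Qed.
Lemma orient_repeat_l a b : orient a a b = 0.
Proof. unfold orient; ring. Qed.

Lemma collinear_on_line a b z : a <> b -> orient a b z = 0 -> exists s, z = lerp a b s.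
Proof.
  intros Hab Ho.
  set (ex := px b - px a). set (ey := py b - py a).
  assert (Hee : ex * ex + ey * ey > 0).
  { destruct (Req_dec ex 0); destruct (Req_dec ey 0); try nra.
    exfalso; apply Hab; apply point_eq; unfold ex, ey in *; lra. }
  set (wx := px z - px a). set (wy := py z - py a).
  assert (Hcr : ex * wy - ey * wx = 0) by (unfold orient in Ho; unfold ex, ey, wx, wy; lra).
  exists ((wx * ex + wy * ey) / (ex * ex + ey * ey)).
  assert (Ex : px z = px a + wx) by (unfold wx; ring).
  assert (Ey : py z = py a + wy) by (unfold wy; ring).
  assert (Ebx : px b = px a + ex) by (unfold ex; ring).
  assert (Eby : py b = py a + ey) by (unfold ey; ring).
  clearbody ex ey wx wy.
  coords; [rewrite Ex, Ebx | rewrite Ey, Eby]; field_simplify_eq; try lra.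
  - assert (ey * (ex * wy - ey * wx) = 0) by (rewrite Hcr; ring). lra.
  - assert (ex * (ex * wy - ey * wx) = 0) by (rewrite Hcr; ring). lra.
Qed.

(* Convex sets, and sets "star-shaped from e": for every y in K the half-open
   segment (e, y] lies in K (e itself need not belong to K). *)
Definition convex (K : point -> Prop) : Prop :=
  forall x y t, K x -> K y -> 0 <= t <= 1 -> K (lerp x y t).

Definition star_from (K : point -> Prop) (e : point) : Prop :=
  forall y t, K y -> 0 < t <= 1 -> K (lerp e y t).

Lemma convex_star_from K e : convex K -> K e -> star_from K e.
Proof. intros HK He y t Hy Ht. apply HK; auto; lra. Qed.

Definition left_part (K : point -> Prop) (a b : point) (y : point) : Prop :=
  K y /\ orient a b y > 0.

Lemma left_part_convex K a b : convex K -> convex (left_part K a b).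
Proof.
  intros HK x y t [Kx Ox] [Ky Oy] Ht. split; [apply HK; auto |].
  rewrite orient_lerp_r. destruct (Req_dec t 0) as [-> | Ht0]; nra.
Qed.

Lemma left_part_star K a b e :
  star_from K e -> orient a b e >= 0 -> star_from (left_part K a b) e.
Proof.
  intros HE Oe y t [Ky Oy] Ht. split; [apply HE; auto |].
  rewrite orient_lerp_r. nra.
Qed.

(* If a, u, x is a counterclockwise triangle with u, x in K and K star-shaped
   from a, then every point b of the triangle other than a lies in K; here b is
   located by the signs of three orientations. *)
Lemma triangle_in K a u x b : convex K -> star_from K a -> K u -> K x ->
  orient a u x > 0 -> orient a u b > 0 -> orient u x b >= 0 -> orient a x b < 0 -> K b.
Proof.
  intros HK Ha Ku Kx Hux Hub Hxb Hab.
  assert (Hsum : orient u x b + (- orient a x b) + orient a u b = orient a u x)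
    by (unfold orient; ring).
  remember (orient a u x) as D. remember (- orient a x b) as be.
  remember (orient a u b) as ga.
  (* b = lerp a y ((be + ga) / D) with y = lerp u x (ga / (be + ga)) on [u,x] *)
  assert (Ky : K (lerp u x (ga / (be + ga)))) by (apply HK; auto; apply ratio_unit; lra).
  assert (Kb : K (lerp a (lerp u x (ga / (be + ga))) ((be + ga) / D))).
  { apply Ha; auto. split; [apply Rdiv_lt_0_compat; lra | apply ratio_unit; lra]. }
  replace b with (lerp a (lerp u x (ga / (be + ga))) ((be + ga) / D)); auto.
  assert (HD0 : D <> 0) by lra. assert (Hbg0 : be + ga <> 0) by lra.
  subst D be ga. coords; unfold orient in *; field; auto.
Qed.

(* Polygonal paths are handled as vertex functions f : nat -> point with n
   vertices f 0, ..., f (n-1), which makes surgery (dropping or truncating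
   vertices) easy; a list vs is the path (vtx vs) with (length vs) vertices. *)
Definition path_pt (f : nat -> point) (n : nat) (x : point) : Prop :=
  exists i, (S i < n)%nat /\ on_segment (f i) (f (S i)) x.

Definition simple (f : nat -> point) (n : nat) : Prop :=
  (2 <= n)%nat /\ (forall i, (S i < n)%nat -> f i <> f (S i)) /\
  (forall i j x, (i < j)%nat -> (S j < n)%nat ->
     on_segment (f i) (f (S i)) x -> on_segment (f j) (f (S j)) x -> j = S i /\ x = f j).

Definition left_turning (f : nat -> point) (n : nat) : Prop :=
  forall i, (0 < i)%nat -> (S i < n)%nat -> orient (f (pred i)) (f i) (f (S i)) >= 0.

Section SimplePath.
Variables (f : nat -> point) (n : nat).
Hypothesis Hs : simple f n.

Lemma simple_distinct i : (S i < n)%nat -> f i <> f (S i).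
Proof. destruct Hs as [_ [Hd _]]. apply Hd. Qed.

Lemma simple_meet i j x : (i < j)%nat -> (S j < n)%nat ->
  on_segment (f i) (f (S i)) x -> on_segment (f j) (f (S j)) x -> j = S i /\ x = f j.
Proof. destruct Hs as [_ [_ Hss]]. apply Hss. Qed.

Lemma start_on_first j : (S j < n)%nat -> on_segment (f j) (f (S j)) (f O) -> j = O.
Proof.
  intros Hj Hseg. destruct j as [| j]; auto.
  destruct (simple_meet O (S j) (f O)) as [E E']; auto; try lia.
  - apply segment_start.
  - exfalso. injection E as ->. exact (simple_distinct O ltac:(lia) E').
Qed.

Lemma end_on_last j : (S j < n)%nat -> on_segment (f j) (f (S j)) (f (pred n)) -> S j = pred n.
Proof.
  intros Hj Hseg.
  destruct (Nat.eq_dec (S j) (pred n)) as [E | E]; auto. exfalso.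
  destruct (simple_meet j (n - 2) (f (pred n))) as [_ E2]; auto; try lia.
  - replace (S (n - 2)) with (pred n) by lia. apply segment_end.
  - apply (simple_distinct (n - 2)); try lia. rewrite <- E2. f_equal. lia.
Qed.

Lemma lerp_not_start k t : (S k < n)%nat -> 0 < t <= 1 -> lerp (f k) (f (S k)) t <> f O.
Proof.
  intros Hk Ht E. assert (Hk0 : k = O).
  { apply start_on_first; auto. rewrite <- E. apply segment_at. lra. }
  subst k. assert (E0 : lerp (f O) (f 1%nat) t = lerp (f O) (f 1%nat) 0) by now rewrite lerp0.
  apply lerp_inj in E0; [lra | apply simple_distinct; lia].
Qed.

Lemma lerp_not_end k t : (S k < n)%nat -> 0 <= t < 1 -> lerp (f k) (f (S k)) t <> f (pred n).
Proof.
  intros Hk Ht E. assert (Hk0 : S k = pred n).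
  { apply end_on_last; auto. rewrite <- E. apply segment_at. lra. }
  assert (E1 : lerp (f k) (f (S k)) t = lerp (f k) (f (S k)) 1) by now rewrite lerp1, E, Hk0.
  apply lerp_inj in E1; [lra | apply simple_distinct; lia].
Qed.

Lemma segment_not_start k x : (0 < k)%nat -> (S k < n)%nat ->
  on_segment (f k) (f (S k)) x -> x <> f O.
Proof. intros Hk0 Hk Hx E. rewrite E in Hx. apply start_on_first in Hx; lia. Qed.

Lemma segment_not_end k x : (S k < pred n)%nat ->
  on_segment (f k) (f (S k)) x -> x <> f (pred n).
Proof. intros Hk Hx E. rewrite E in Hx. apply end_on_last in Hx; lia. Qed.

(* At a straight first interior vertex, f 1 lies strictly between f 0 and f 2:
   the other collinear configurations make the first two segments overlap. *)
Lemma straight_vertex_between : (3 <= n)%nat -> orient (f O) (f 1%nat) (f 2%nat) = 0 ->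
  exists m, 0 < m < 1 /\ f 1%nat = lerp (f O) (f 2%nat) m.
Proof.
  intros Hn Ho.
  assert (H01 : f O <> f 1%nat) by (apply simple_distinct; lia).
  assert (H12 : f 1%nat <> f 2%nat) by (apply simple_distinct; lia).
  destruct (collinear_on_line _ _ _ H01 Ho) as [s Es].
  destruct (Rlt_le_dec 1 s) as [Hs1 | Hs1].
  - exists (/ s). split.
    + split; [apply Rinv_0_lt_compat; lra |].
      apply Rmult_lt_reg_r with s; [lra |]. rewrite Rinv_l; lra.
    + rewrite Es. coords; field; lra.
  - exfalso. destruct (Rle_lt_dec 0 s) as [Hs0 | Hs0].
    + (* f 2 lies on the first segment *)
      destruct (simple_meet O 1 (f 2%nat)) as [_ E]; try lia.
      * rewrite Es. apply segment_at. lra.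
      * apply segment_end.
      * apply H12. symmetry. exact E.
    + (* f 0 lies on the second segment *)
      destruct (simple_meet O 1 (f O)) as [_ E]; try lia.
      * apply segment_start.
      * replace (f O) with (lerp (f 1%nat) (f 2%nat) (/ (1 - s))).
        -- apply segment_at. split; [left; apply Rinv_0_lt_compat; lra |].
           apply Rmult_le_reg_r with (1 - s); [lra |]. rewrite Rinv_l; lra.
        -- rewrite Es. coords; field; lra.
      * exact (H01 E).
Qed.
End SimplePath.

Definition window (f : nat -> point) (n : nat) (K : point -> Prop) : Prop :=
  convex K /\ star_from K (f O) /\ star_from K (f (pred n)) /\
  ~ K (f O) /\ ~ K (f (pred n)) /\
  (forall x, path_pt f n x -> x <> f O -> x <> f (pred n) -> K x).

Definition tail (f : nat -> point) : nat -> point := fun k => f (S k).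

Definition drop_second (f : nat -> point) : nat -> point :=
  fun k => match k with O => f O | S k' => f (S (S k')) end.

Definition cut (f : nat -> point) (j : nat) (z : point) : nat -> point :=
  fun k => if (k <=? j)%nat then f k else z.

Lemma left_turning_tail f n : left_turning f n -> left_turning (tail f) (pred n).
Proof.
  intros Hl i Hi Hi2. destruct i as [| i]; [lia |]. apply (Hl (S (S i))); lia.
Qed.

Lemma simple_tail f n : simple f n -> (3 <= n)%nat -> simple (tail f) (pred n).
Proof.
  intros Hs Hn. split; [lia | split].
  - intros i Hi. apply (simple_distinct f n Hs); lia.
  - intros i j x Hij Hj H1 H2.
    destruct (simple_meet f n Hs (S i) (S j) x) as [E E']; auto; lia.
Qed.

Lemma drop_second_end f n : (3 <= n)%nat -> drop_second f (pred (pred n)) = f (pred n).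
Proof. intros Hn. destruct n as [| [| [| k]]]; [lia.. | reflexivity]. Qed.

Section DropStraightVertex.
Variables (f : nat -> point) (n : nat) (m : R).
Hypothesis Hs : simple f n.
Hypothesis Hn : (3 <= n)%nat.
Hypothesis Hm : 0 < m < 1.
Hypothesis Hf1 : f 1%nat = lerp (f O) (f 2%nat) m.

Lemma drop_second_segment x : on_segment (f O) (f 2%nat) x <->
  on_segment (f O) (f 1%nat) x \/ on_segment (f 1%nat) (f 2%nat) x.
Proof.
  rewrite Hf1. split.
  - apply segment_split; exact Hm.
  - intros [Hx | Hx]; [eapply subsegment_left | eapply subsegment_right]; eauto; lra.
Qed.

Lemma drop_second_path_pt x : path_pt (drop_second f) (pred n) x <-> path_pt f n x.
Proof.
  split.
  - intros [[| i] [Hi Hx]]; simpl in Hx.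
    + apply drop_second_segment in Hx as [Hx | Hx];
        [exists O | exists 1%nat]; split; auto; lia.
    + exists (S (S i)). split; auto. lia.
  - intros [[| [| i]] [Hi Hx]].
    + exists O. split; [lia |]. apply drop_second_segment. auto.
    + exists O. split; [lia |]. apply drop_second_segment. auto.
    + exists (S i). split; [lia | exact Hx].
Qed.

Lemma drop_second_simple : simple (drop_second f) (pred n).
Proof.
  split; [lia | split].
  - intros [| i] Hi; simpl.
    + intro E. apply (simple_distinct f n Hs O); [lia |].
      rewrite Hf1, E. coords; ring.
    + apply (simple_distinct f n Hs); lia.
  - intros i [| j] x Hij Hj Hx1 Hx2; [lia |]. simpl in Hx2.
    destruct i as [| i]; simpl in Hx1.
    + apply drop_second_segment in Hx1 as [Hx1 | Hx1].
      * destruct (simple_meet f n Hs O (S (S j)) x); auto; lia.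
      * destruct (simple_meet f n Hs 1 (S (S j)) x) as [E E']; auto; lia.
    + destruct (simple_meet f n Hs (S (S i)) (S (S j)) x) as [E E']; auto; lia.
Qed.

(* The new turn at f 2 is the old one scaled by 1 - m. *)
Lemma drop_second_left_turning : left_turning f n -> left_turning (drop_second f) (pred n).
Proof.
  intros Hl [| [| i]] Hi Hi2; [lia | |]; simpl.
  - assert (H := Hl 2%nat ltac:(lia) ltac:(lia)). simpl in H.
    rewrite Hf1, orient_lerp_l, orient_repeat_l in H. nra.
  - apply (Hl (S (S (S i)))); lia.
Qed.

Lemma drop_second_window K : window f n K -> window (drop_second f) (pred n) K.
Proof.
  intros [HK [Ha [Hb [Na [Nb Hin]]]]]. unfold window.
  rewrite drop_second_end by exact Hn. change (drop_second f O) with (f O).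
  repeat split; auto.
  intros x Hx. apply Hin. apply drop_second_path_pt. exact Hx.
Qed.
End DropStraightVertex.

Lemma cut_before f j z k : (k <= j)%nat -> cut f j z k = f k.
Proof. intros Hk. unfold cut. destruct (Nat.leb_spec k j); [reflexivity | lia]. Qed.

Lemma cut_last f j z : cut f j z (S j) = z.
Proof. unfold cut. destruct (Nat.leb_spec (S j) j); [lia | reflexivity]. Qed.

Section CutPath.
Variables (f : nat -> point) (n j : nat) (t0 : R).
Hypothesis Hs : simple f n.
Hypothesis Hj : (S j < n)%nat.
Hypothesis Ht0 : 0 < t0 <= 1.
Let z := lerp (f j) (f (S j)) t0.

Lemma cut_segment k x : (k <= j)%nat ->
  on_segment (cut f j z k) (cut f j z (S k)) x -> on_segment (f k) (f (S k)) x.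
Proof.
  intros Hk Hx. rewrite cut_before in Hx by lia.
  destruct (Nat.eq_dec k j) as [-> | E].
  - rewrite cut_last in Hx. eapply subsegment_left; [| exact Hx]. lra.
  - rewrite cut_before in Hx by lia. exact Hx.
Qed.

Lemma cut_simple : simple (cut f j z) (S (S j)).
Proof.
  split; [lia | split].
  - intros k Hk. rewrite cut_before by lia.
    destruct (Nat.eq_dec k j) as [-> | E].
    + rewrite cut_last. intro E.
      assert (E0 : lerp (f j) (f (S j)) 0 = lerp (f j) (f (S j)) t0) by (rewrite lerp0; exact E).
      apply lerp_inj in E0; [lra | apply (simple_distinct f n Hs); lia].
    + rewrite cut_before by lia. apply (simple_distinct f n Hs); lia.
  - intros k l x Hkl Hl Hx1 Hx2.
    apply cut_segment in Hx1; [| lia]. apply cut_segment in Hx2; [| lia].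
    destruct (simple_meet f n Hs k l x) as [E E']; auto; try lia.
    split; [exact E | rewrite cut_before by lia; exact E'].
Qed.

(* The last turn of the cut path is the original turn at f j scaled by t0. *)
Lemma cut_left_turning : left_turning f n -> left_turning (cut f j z) (S (S j)).
Proof.
  intros Hl k Hk Hk2.
  rewrite (cut_before f j z (pred k)), (cut_before f j z k) by lia.
  assert (H := Hl k Hk ltac:(lia)).
  destruct (Nat.eq_dec k j) as [-> | E].
  - rewrite cut_last. unfold z. rewrite orient_lerp_r, orient_repeat_r. nra.
  - rewrite cut_before by lia. exact H.
Qed.
End CutPath.

Definition side_property (n : nat) : Prop :=
  forall f K, simple f n -> left_turning f n -> window f n K ->
  forall x, path_pt f n x -> orient (f O) x (f (pred n)) >= 0.

Lemma first_zero h0 h1 t1 : h0 > 0 -> 0 <= t1 <= 1 -> (1 - t1) * h0 + t1 * h1 <= 0 ->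
  exists t0, 0 < t0 <= 1 /\ (1 - t0) * h0 + t0 * h1 = 0 /\
    forall s, 0 <= s < t0 -> (1 - s) * h0 + s * h1 > 0.
Proof.
  intros H0 Ht1 Hle.
  assert (Hd : h0 - h1 > 0) by nra.
  exists (h0 / (h0 - h1)). split; [| split].
  - split; [apply Rdiv_lt_0_compat; lra | apply ratio_unit; nra].
  - field. lra.
  - intros s Hs. assert (Hs' : s * (h0 - h1) < h0).
    { apply Rmult_lt_reg_r with (/ (h0 - h1)); [apply Rinv_0_lt_compat; lra |].
      field_simplify; lra. }
    nra.
Qed.

Section StrictFirstTurn.
Variables (n : nat) (f : nat -> point) (K : point -> Prop).
Hypothesis IH : forall m, (m < n)%nat -> side_property m.
Hypothesis Hs : simple f n.
Hypothesis Hl : left_turning f n.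
Hypothesis Hw : window f n K.
Hypothesis Hn : (3 <= n)%nat.
Hypothesis Hturn : orient (f O) (f 1%nat) (f 2%nat) > 0.

Lemma second_vertex_in : K (f 1%nat).
Proof.
  destruct Hw as [_ [_ [_ [_ [_ Hin]]]]]. apply Hin.
  - exists O. split; [lia | apply segment_end].
  - intro E. apply (simple_distinct f n Hs O); [lia | auto].
  - intro E. assert (H := end_on_last f n Hs O ltac:(lia)).
    rewrite <- E in H. specialize (H (segment_end _ _)). lia.
Qed.

Lemma star_from_path_point k t : (S k < n)%nat -> 0 < t <= 1 ->
  star_from K (lerp (f k) (f (S k)) t).
Proof.
  destruct Hw as [HK [_ [Hb [_ [_ Hin]]]]]. intros Hk Ht.
  destruct (classic (lerp (f k) (f (S k)) t = f (pred n))) as [-> | E]; [exact Hb |].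
  apply convex_star_from; auto. apply Hin; auto.
  - exists k. split; auto. apply segment_at. lra.
  - apply (lerp_not_start f n); auto.
Qed.

Lemma cut_prefix_window k t0 : (S (S k) < n)%nat -> 0 < t0 <= 1 ->
  (forall j x, (j < k)%nat -> on_segment (f (S j)) (f (S (S j))) x -> x <> f 1%nat ->
     orient (f O) (f 1%nat) x > 0) ->
  (forall s, 0 <= s < t0 -> orient (f O) (f 1%nat) (lerp (f (S k)) (f (S (S k))) s) > 0) ->
  orient (f O) (f 1%nat) (lerp (f (S k)) (f (S (S k))) t0) = 0 ->
  window (cut (tail f) k (lerp (f (S k)) (f (S (S k))) t0)) (S (S k))
         (left_part K (f O) (f 1%nat)).
Proof.
  intros Hk Ht0 Hprev Hbefore Hz.
  set (z := lerp (f (S k)) (f (S (S k))) t0) in *.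
  destruct Hw as [HK [_ [_ [_ [_ Hin]]]]].
  assert (Hz0 : cut (tail f) k z O = f 1%nat) by (apply (cut_before (tail f)); lia).
  assert (Hze : cut (tail f) k z (pred (S (S k))) = z) by (apply cut_last).
  unfold window. rewrite Hz0, Hze. split; [| split; [| split; [| split; [| split]]]].
  - apply left_part_convex, HK.
  - apply left_part_star; [apply convex_star_from; auto; apply second_vertex_in |].
    rewrite orient_repeat_r. lra.
  - apply left_part_star; [apply star_from_path_point; auto | lra].
  - intros [_ H]. rewrite orient_repeat_r in H. lra.
  - intros [_ H]. lra.
  - intros y [j [Hj Hy]] Hy1 Hyz.
    assert (Hyf : on_segment (f (S j)) (f (S (S j))) y)
      by (apply (cut_segment (tail f) (pred n) k t0); auto; lia).
    assert (Hy0 : y <> f O) by (apply (segment_not_start f n Hs (S j)); auto; lia).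
    destruct (Nat.eq_dec j k) as [-> | Hjk].
    +
      rewrite (cut_before (tail f)), cut_last in Hy by lia.
      destruct (segment_param _ _ _ Hy) as [s [Hs1 Ey]]. unfold z in Ey.
      rewrite lerp_lerp in Ey.
      assert (Hs2 : s < 1).
      { destruct (Req_dec s 1) as [-> | ]; [| lra].
        exfalso. apply Hyz. rewrite Ey. unfold z. f_equal. ring. }
      split.
      * apply Hin; auto; [exists (S k); split; auto; lia |].
        rewrite Ey. apply (lerp_not_end f n); [auto | lia | nra].
      * rewrite Ey. apply Hbefore. nra.
    + split.
      * apply Hin; auto; [exists (S j); split; auto; lia |].
        apply (segment_not_end f n Hs (S j)); auto; lia.
      * apply (Hprev j); auto; lia.
Qed.

(* A point z of a later segment, on the line f 0 f 1 and to the left of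
   f 1 f 2, would lie either on the first segment (contradicting simplicity)
   or beyond f 0, forcing f 0 into K. *)
Lemma first_line_not_recrossed k z : (1 <= k)%nat -> (S (S k) < n)%nat ->
  on_segment (f (S k)) (f (S (S k))) z -> orient (f O) (f 1%nat) z = 0 ->
  orient (f 1%nat) (f 2%nat) z >= 0 -> star_from K z -> False.
Proof.
  intros Hk1 Hk Hz Hline Hleft Hstar.
  destruct Hw as [_ [_ [_ [Na _]]]].
  destruct (collinear_on_line (f O) (f 1%nat) z) as [s Es]; auto.
  { apply (simple_distinct f n Hs O). lia. }
  assert (Hs1 : s <= 1).
  { assert (Hrel : orient (f 1%nat) (f 2%nat) z = (1 - s) * orient (f O) (f 1%nat) (f 2%nat))
      by (rewrite Es; unfold orient; rewrite px_lerp, py_lerp; ring).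
    nra. }
  destruct (Rle_lt_dec 0 s) as [Hs0 | Hs0].
  - destruct (simple_meet f n Hs O (S k) z) as [E _]; auto; try lia.
    rewrite Es. apply segment_at. lra.
  - apply Na. replace (f O) with (lerp z (f 1%nat) (- s / (1 - s))).
    + apply Hstar; [apply second_vertex_in |].
      split; [apply Rdiv_lt_0_compat; lra | apply ratio_unit; lra].
    + rewrite Es. coords; field; lra.
Qed.

(* Every point of the tail other than f 1 lies strictly left of the line f 0 f 1.
   By induction along the tail: at the first point z where the segment
   [f (S k), f (S (S k))] would reach that line, the induction hypothesis of the
   side property applied to the prefix ending at z puts z to the left of f 1 f 2,
   which first_line_not_recrossed excludes. *)
Lemma tail_stays_left k x : (S (S k) < n)%nat ->
  on_segment (f (S k)) (f (S (S k))) x -> x <> f 1%nat -> orient (f O) (f 1%nat) x > 0.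
Proof.
  revert x. induction k as [k IHk] using lt_wf_ind. intros x Hk Hx Hx1.
  destruct (segment_param _ _ _ Hx) as [t1 [Ht1 ->]].
  rewrite orient_lerp_r. destruct k as [| k].
  - rewrite orient_repeat_r.
    destruct (Req_dec t1 0) as [-> | Ht10]; [now rewrite lerp0 in Hx1 |]. nra.
  - assert (Hv : orient (f O) (f 1%nat) (f (S (S k))) > 0).
    { apply (IHk k); [lia | lia | apply segment_end |]. intro E.
      destruct (simple_meet f n Hs O (S (S k)) (f 1%nat)) as [E' _]; try lia.
      - apply segment_end.
      - rewrite <- E. apply segment_start. }
    apply Rnot_le_lt. intro Hle.
    destruct (first_zero _ _ _ Hv Ht1 Hle) as [t0 [Ht0 [Hz Hbefore]]].
    set (z := lerp (f (S (S k))) (f (S (S (S k)))) t0).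
    assert (Hz' : orient (f O) (f 1%nat) z = 0) by (unfold z; rewrite orient_lerp_r; exact Hz).
    assert (Hbefore' : forall s, 0 <= s < t0 ->
              orient (f O) (f 1%nat) (lerp (f (S (S k))) (f (S (S (S k)))) s) > 0)
      by (intros s Hs'; rewrite orient_lerp_r; auto).
    apply (first_line_not_recrossed (S k) z); try lia.
    + apply segment_at. lra.
    + exact Hz'.
    + assert (Hside := IH (S (S (S k))) ltac:(lia) _ _
               (cut_simple (tail f) (pred n) (S k) t0 (simple_tail f n Hs Hn) ltac:(lia) Ht0)
               (cut_left_turning (tail f) (pred n) (S k) t0 ltac:(lia) Ht0
                  (left_turning_tail f n Hl))
               (cut_prefix_window (S k) t0 ltac:(lia) Ht0
                  (fun j x Hj => IHk j Hj x ltac:(lia)) Hbefore' Hz')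
               (f 2%nat)).
      rewrite (cut_before (tail f)), cut_last in Hside by lia. apply Hside.
      exists O. split; [lia |]. rewrite !(cut_before (tail f)) by lia. apply segment_end.
    + apply star_from_path_point; auto.
Qed.

Lemma last_vertex_left : orient (f O) (f 1%nat) (f (pred n)) > 0.
Proof.
  apply (tail_stays_left (n - 3)); [lia | |].
  - replace (S (S (n - 3))) with (pred n) by lia. apply segment_end.
  - intro E. assert (H := end_on_last f n Hs O ltac:(lia)).
    rewrite E in H. specialize (H (segment_end _ _)). lia.
Qed.

Lemma tail_window : window (tail f) (pred n) (left_part K (f O) (f 1%nat)).
Proof.
  destruct Hw as [HK [_ [Hb [_ [Nb Hin]]]]].
  unfold window, tail. replace (S (pred (pred n))) with (pred n) by lia.
  split; [| split; [| split; [| split; [| split]]]].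
  - apply left_part_convex, HK.
  - apply left_part_star; [apply convex_star_from; auto; apply second_vertex_in |].
    rewrite orient_repeat_r. lra.
  - apply left_part_star; auto. left. apply last_vertex_left.
  - intros [_ H]. rewrite orient_repeat_r in H. lra.
  - intros [H _]. auto.
  - intros y [k [Hk Hy]] Hy1 Hyn. split.
    + apply Hin; auto; [exists (S k); split; auto; lia |].
      apply (segment_not_start f n Hs (S k)); auto; lia.
    + apply (tail_stays_left k); auto. lia.
Qed.

(* Conclusion of the step: the side property for f, from the side property of
   the tail (with respect to f 1) and a triangle argument. *)
Lemma strict_turn_side x : path_pt f n x -> orient (f O) x (f (pred n)) >= 0.
Proof.
  destruct Hw as [HK [Ha [_ [_ [Nb Hin]]]]].
  assert (Hb := last_vertex_left).
  intros [[| i] [Hi Hx]].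
  - destruct (segment_param _ _ _ Hx) as [t [Ht ->]].
    rewrite orient_lerp_m, orient_repeat_l. nra.
  - assert (Htail : orient (f 1%nat) x (f (pred n)) >= 0).
    { assert (H := IH (pred n) ltac:(lia) (tail f) _ (simple_tail f n Hs Hn)
                  (left_turning_tail f n Hl) tail_window x).
      unfold tail in H. replace (S (pred (pred n))) with (pred n) in H by lia.
      apply H. exists i. split; [lia | exact Hx]. }
    destruct (classic (x = f 1%nat)) as [-> | Hx1]; [lra |].
    assert (Hx0 := tail_stays_left i x ltac:(lia) Hx Hx1).
    apply Rnot_lt_ge. intro Hneg. apply Nb.
    apply (triangle_in K (f O) (f 1%nat) x); auto.
    + apply second_vertex_in.
    + apply Hin; [exists (S i); split; auto | |].
      * apply (segment_not_start f n Hs (S i)); auto; lia.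
      * intro E. rewrite E, orient_repeat_r in Hneg. lra.
Qed.
End StrictFirstTurn.

Theorem side_property_holds n : side_property n.
Proof.
  induction n as [n IH] using lt_wf_ind.
  intros f K Hs Hl Hw x Hx.
  destruct (Nat.eq_dec n 2) as [-> | Hn].
  - destruct Hx as [[| i] [Hi Hx]]; [| lia].
    destruct (segment_param _ _ _ Hx) as [t [Ht ->]].
    rewrite orient_lerp_m, orient_repeat_l, orient_repeat_r. lra.
  - assert (Hn3 : (3 <= n)%nat) by (destruct Hs; lia).
    destruct (Rge_gt_or_eq_dec _ _ (Hl 1%nat ltac:(lia) ltac:(lia))) as [Hturn | Hstraight].
    + exact (strict_turn_side n f K IH Hs Hl Hw Hn3 Hturn x Hx).
    + destruct (straight_vertex_between f n Hs Hn3 Hstraight) as [m [Hm Hf1]].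
      rewrite <- (drop_second_end f n Hn3).
      change (f O) with (drop_second f O).
      apply (IH (pred n) ltac:(lia) (drop_second f) K).
      * apply (drop_second_simple f n m); auto.
      * apply (drop_second_left_turning f n m); auto.
      * apply (drop_second_window f n m); auto.
      * apply (drop_second_path_pt f n m); auto.
Qed.

Definition power (c : point) (rho : R) (x : point) : R := dist2 x c - rho ^ 2.

Lemma dist2_pos u w : u <> w -> dist2 u w > 0.
Proof.
  intros H. unfold dist2.
  destruct (Req_dec (px u - px w) 0); destruct (Req_dec (py u - py w) 0); try nra.
  exfalso. apply H. apply point_eq; lra.
Qed.

Lemma dist2_ge0 u w : dist2 u w >= 0.
Proof. unfold dist2. apply Rle_ge, Rplus_le_le_0_compat; apply pow2_ge_0. Qed.

Lemma power_lerp c rho u w t : power c rho (lerp u w t) =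
  (1 - t) * power c rho u + t * power c rho w - t * (1 - t) * dist2 u w.
Proof. unfold power, dist2; rewrite px_lerp, py_lerp; ring. Qed.

Lemma power_continuous c rho u w : continuity (fun t => power c rho (lerp u w t)).
Proof. unfold power, dist2, lerp, px, py; simpl. reg. Qed.

Lemma disk_convex c rho : convex (in_open_disk c rho).
Proof.
  intros x y t Hx Hy Ht.
  assert (Px : power c rho x < 0) by (unfold power, in_open_disk in *; lra).
  assert (Py : power c rho y < 0) by (unfold power, in_open_disk in *; lra).
  assert (Hlt : power c rho (lerp x y t) < 0).
  { rewrite power_lerp. assert (H := dist2_ge0 x y).
    assert (t * (1 - t) * dist2 x y >= 0) by (apply Rle_ge, Rmult_le_pos; nra).
    destruct (Req_dec t 0) as [-> | Ht0]; nra. }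
  unfold power, in_open_disk in *. lra.
Qed.

Lemma disk_star_from_circle c rho e : on_circle c rho e -> star_from (in_open_disk c rho) e.
Proof.
  intros He y t Hy Ht.
  assert (Pe : power c rho e = 0) by (unfold power, on_circle in *; lra).
  assert (Py : power c rho y < 0) by (unfold power, in_open_disk in *; lra).
  assert (Hlt : power c rho (lerp e y t) < 0).
  { rewrite power_lerp, Pe. assert (H := dist2_ge0 e y).
    assert (t * (1 - t) * dist2 e y >= 0) by (apply Rle_ge, Rmult_le_pos; nra). nra. }
  unfold power, in_open_disk in *. lra.
Qed.

Lemma sign_change_zero (g : R -> R) a b : continuity g -> a < b -> g a * g b < 0 ->
  exists z, a < z < b /\ g z = 0.
Proof.
  intros Hg Hab Hm.
  assert (Hz : exists z, a <= z <= b /\ g z = 0).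
  { destruct (Rlt_le_dec (g a) 0) as [Ha | Ha].
    - destruct (IVT g a b Hg Hab Ha) as [z Hz]; [nra | exists z; exact Hz].
    - assert (Hga : g a > 0) by (destruct Ha as [Ha | Ha]; [exact Ha | rewrite <- Ha in Hm; lra]).
      assert (Hgb : - g b > 0) by nra.
      destruct (IVT (fun t => - g t) a b) as [z [Hz1 Hz2]].
      + apply continuity_opp. exact Hg.
      + exact Hab.
      + lra.
      + exact Hgb.
      + exists z. split; [exact Hz1 | lra]. }
  destruct Hz as [z [Hz Hgz]]. exists z. split; [| exact Hgz].
  split; apply Rnot_ge_lt; intro E.
  - replace z with a in Hgz by lra. rewrite Hgz in Hm. lra.
  - replace z with b in Hgz by lra. rewrite Hgz in Hm. lra.
Qed.

Definition chord_path (c : point) (rho : R) (q : point) (f : nat -> point) (n : nat) : Prop :=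
  on_circle c rho (f O) /\ on_circle c rho (f (pred n)) /\ in_open_disk c rho q /\
  simple f n /\ path_pt f n q /\
  (forall x, path_pt f n x -> on_circle c rho x -> x = f O \/ x = f (pred n)).

(* Such a path lies in the open disk apart from its endpoints: its interior
   vertices are off the circle and, since no segment can cross the circle, all
   on the side of q. *)
Section ChordPathInDisk.
Variables (c : point) (rho : R) (q : point) (f : nat -> point) (n : nat).
Hypothesis Hchord : chord_path c rho q f n.

Lemma chord_simple : simple f n.
Proof. apply Hchord. Qed.

Lemma segment_off_circle k t : (S k < n)%nat -> 0 < t < 1 ->
  power c rho (lerp (f k) (f (S k)) t) <> 0.
Proof.
  destruct Hchord as [_ [_ [_ [Hs [_ HC]]]]]. intros Hk Ht H0.
  destruct (HC (lerp (f k) (f (S k)) t)) as [E | E].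
  - exists k. split; [exact Hk | apply segment_at; lra].
  - unfold power, on_circle in *. lra.
  - exact (lerp_not_start f n Hs k t Hk ltac:(lra) E).
  - exact (lerp_not_end f n Hs k t Hk ltac:(lra) E).
Qed.

Lemma vertex_off_circle j : (0 < j)%nat -> (j < pred n)%nat -> power c rho (f j) <> 0.
Proof.
  intros Hj1 Hj2. destruct j as [| j]; [lia |].
  replace (f (S j)) with (lerp (f j) (f (S j)) 1) by apply lerp1.
  destruct Hchord as [_ [_ [_ [Hs [_ HC]]]]].
  intro H0. destruct (HC (lerp (f j) (f (S j)) 1)) as [E | E].
  - exists j. split; [lia | apply segment_at; lra].
  - unfold power, on_circle in *. lra.
  - exact (lerp_not_start f n Hs j 1 ltac:(lia) ltac:(lra) E).
  - rewrite lerp1 in E.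
    assert (E0 : lerp (f (S j)) (f (S (S j))) 0 = f (pred n)) by (rewrite lerp0; exact E).
    exact (lerp_not_end f n Hs (S j) 0 ltac:(lia) ltac:(lra) E0).
Qed.

Lemma no_sign_change k t1 t2 : (S k < n)%nat -> 0 <= t1 <= 1 -> 0 <= t2 <= 1 ->
  power c rho (lerp (f k) (f (S k)) t1) * power c rho (lerp (f k) (f (S k)) t2) < 0 -> False.
Proof.
  intros Hk Ht1 Ht2 Hm.
  assert (Hcross : forall a b, 0 <= a -> a < b -> b <= 1 ->
    power c rho (lerp (f k) (f (S k)) a) * power c rho (lerp (f k) (f (S k)) b) < 0 -> False).
  { intros a b Ha Hab Hb Hab'.
    destruct (sign_change_zero _ a b (power_continuous c rho (f k) (f (S k))) Hab Hab')
      as [z [Hz Hz0]].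
    exact (segment_off_circle k z Hk ltac:(lra) Hz0). }
  destruct (Rtotal_order t1 t2) as [H | [-> | H]].
  - exact (Hcross t1 t2 ltac:(lra) H ltac:(lra) Hm).
  - nra.
  - apply (Hcross t2 t1); [lra | exact H | lra |]. rewrite Rmult_comm. exact Hm.
Qed.

(* All interior vertices lie on the same side of the circle as f 1, since
   consecutive vertices cannot be on opposite sides. *)
Lemma interior_vertices_same_side j : (0 < j)%nat -> (j < pred n)%nat ->
  power c rho (f 1%nat) * power c rho (f j) > 0.
Proof.
  induction j as [| j IHj]; intros Hj1 Hj2; [lia |].
  destruct (Nat.eq_dec j 0) as [-> | Hj0].
  - assert (H := vertex_off_circle 1 Hj1 Hj2). nra.
  - assert (H1 := IHj ltac:(lia) ltac:(lia)).
    assert (H2 := vertex_off_circle (S j) Hj1 Hj2).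
    assert (H3 : power c rho (f j) * power c rho (f (S j)) >= 0).
    { apply Rnot_lt_ge. intro Hm. apply (no_sign_change j 0 1); [lia | lra | lra |].
      rewrite lerp0, lerp1. exact Hm. }
    assert (H4 := vertex_off_circle j ltac:(lia) ltac:(lia)). nra.
Qed.

Lemma interior_vertex_inside j : (0 < j)%nat -> (j < pred n)%nat -> power c rho (f j) < 0.
Proof.
  intros Hj1 Hj2. destruct Hchord as [_ [_ [Hq [_ [[k [Hk Hqk]] _]]]]].
  destruct (Rlt_le_dec (power c rho (f j)) 0) as [H | H]; [exact H | exfalso].
  assert (Hout : forall m, (0 < m)%nat -> (m < pred n)%nat -> power c rho (f m) > 0).
  { intros m Hm1 Hm2.
    assert (Hj := interior_vertices_same_side j Hj1 Hj2).
    assert (Hm := interior_vertices_same_side m Hm1 Hm2).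
    assert (Hj0 := vertex_off_circle j Hj1 Hj2). nra. }
  destruct (segment_param _ _ _ Hqk) as [tq [Htq Eq]].
  assert (Pq : power c rho (lerp (f k) (f (S k)) tq) < 0)
    by (rewrite <- Eq; unfold power, in_open_disk in *; lra).
  destruct k as [| k].
  -
    apply (no_sign_change O tq 1); [lia | lra | lra |].
    rewrite lerp1. assert (H1 := Hout 1%nat ltac:(lia) ltac:(lia)). nra.
  -
    apply (no_sign_change (S k) 0 tq); [lia | lra | lra |].
    rewrite lerp0. assert (H1 := Hout (S k) ltac:(lia) ltac:(lia)). nra.
Qed.

Lemma path_in_disk x : path_pt f n x -> x <> f O -> x <> f (pred n) -> in_open_disk c rho x.
Proof.
  intros [k [Hk Hx]] H0 Hn.
  assert (Hs := chord_simple).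
  destruct (segment_param _ _ _ Hx) as [t [Ht ->]].
  cut (power c rho (lerp (f k) (f (S k)) t) < 0); [unfold power, in_open_disk; lra |].
  assert (Hvertex : forall m, (m < n)%nat -> power c rho (f m) <= 0).
  { destruct Hchord as [Hp [Hr _]]. intros m Hm.
    destruct (Nat.eq_dec m 0) as [-> | Hm0]; [unfold power, on_circle in *; lra |].
    destruct (Nat.eq_dec m (pred n)) as [-> | Hm1]; [unfold power, on_circle in *; lra |].
    left. apply interior_vertex_inside; lia. }
  destruct (Req_dec t 0) as [-> | Ht0].
  - rewrite lerp0 in *. apply interior_vertex_inside; [| lia].
    destruct k; [exfalso; apply H0; reflexivity | lia].
  - destruct (Req_dec t 1) as [-> | Ht1].
    + rewrite lerp1 in *. apply interior_vertex_inside; [lia |].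
      destruct (Nat.eq_dec (S k) (pred n)) as [E | E]; [exfalso; apply Hn; now rewrite E | lia].
    + rewrite power_lerp.
      assert (HD := dist2_pos (f k) (f (S k)) (simple_distinct f n Hs k Hk)).
      assert (Hk0 := Hvertex k ltac:(lia)). assert (Hk1 := Hvertex (S k) Hk).
      assert (t * (1 - t) * dist2 (f k) (f (S k)) > 0)
        by (apply Rmult_lt_0_compat; [apply Rmult_lt_0_compat |]; lra).
      nra.
Qed.

Lemma disk_window : window f n (in_open_disk c rho).
Proof.
  destruct Hchord as [Hp [Hr _]].
  split; [apply disk_convex | split; [| split; [| split; [| split]]]].
  - apply disk_star_from_circle; auto.
  - apply disk_star_from_circle; auto.
  - unfold in_open_disk, on_circle in *; lra.
  - unfold in_open_disk, on_circle in *; lra.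
  - exact path_in_disk.
Qed.
End ChordPathInDisk.

Lemma left_turning_chord_side c rho q f n :
  chord_path c rho q f n -> left_turning f n -> orient (f O) q (f (pred n)) >= 0.
Proof.
  intros Hchord Hl.
  apply (side_property_holds n f (in_open_disk c rho)); auto.
  - exact (chord_simple c rho q f n Hchord).
  - exact (disk_window c rho q f n Hchord).
  - apply Hchord.
Qed.

(* Reflection in the x-axis preserves distances and reverses orientations; it
   reduces the counterclockwise case to the clockwise one. *)
Definition mirror (x : point) : point := (px x, - py x).

Lemma mirror_involutive x : mirror (mirror x) = x.
Proof. apply point_eq; unfold mirror, px, py; simpl; ring. Qed.

Lemma orient_mirror a b c : orient (mirror a) (mirror b) (mirror c) = - orient a b c.
Proof. unfold orient, mirror, px, py; simpl; ring. Qed.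

Lemma dist2_mirror x y : dist2 (mirror x) (mirror y) = dist2 x y.
Proof. unfold dist2, mirror, px, py; simpl; ring. Qed.

Lemma segment_mirror u w x : on_segment u w x -> on_segment (mirror u) (mirror w) (mirror x).
Proof.
  intros Hx. destruct (segment_param _ _ _ Hx) as [t [Ht ->]].
  replace (mirror (lerp u w t)) with (lerp (mirror u) (mirror w) t)
    by (apply point_eq; unfold mirror, lerp, px, py; simpl; ring).
  apply segment_at. exact Ht.
Qed.

Lemma segment_unmirror u w x : on_segment (mirror u) (mirror w) x -> on_segment u w (mirror x).
Proof.
  intros Hx. rewrite <- (mirror_involutive u), <- (mirror_involutive w).
  apply segment_mirror. exact Hx.
Qed.

Lemma chord_path_mirror c rho q f n : chord_path c rho q f n ->
  chord_path (mirror c) rho (mirror q) (fun k => mirror (f k)) n.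
Proof.
  unfold chord_path, on_circle, in_open_disk. rewrite !dist2_mirror.
  intros [Hp [Hr [Hq [[H2 [Hd Hss]] [[i [Hi Hqi]] HC]]]]].
  split; [exact Hp | split; [exact Hr | split; [exact Hq | split; [split; [exact H2 | split] | split]]]].
  - intros k Hk E. apply (Hd k Hk).
    rewrite <- (mirror_involutive (f k)), E. apply mirror_involutive.
  - intros k l x Hkl Hl Hx1 Hx2.
    destruct (Hss k l (mirror x)) as [E E']; try apply segment_unmirror; auto.
    split; [exact E |]. rewrite <- E'. symmetry. apply mirror_involutive.
  - exists i. split; [exact Hi | apply segment_mirror; exact Hqi].
  - intros x [k [Hk Hx]] Hxc.
    assert (Hc : dist2 (mirror x) c = rho ^ 2).
    { rewrite <- (mirror_involutive c), dist2_mirror. exact Hxc. }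
    destruct (HC (mirror x)) as [E | E];
      [exists k; split; [exact Hk | apply segment_unmirror; exact Hx] | exact Hc | left | right];
      rewrite <- E; symmetry; apply mirror_involutive.
Qed.

Lemma right_turning_chord_side c rho q f n : chord_path c rho q f n ->
  (forall i, (0 < i)%nat -> (S i < n)%nat -> orient (f (pred i)) (f i) (f (S i)) <= 0) ->
  orient (f O) q (f (pred n)) <= 0.
Proof.
  intros Hchord Hr.
  assert (H := left_turning_chord_side _ _ _ _ n (chord_path_mirror c rho q f n Hchord)).
  cbv beta in H. rewrite orient_mirror in H. cut (- orient (f O) q (f (pred n)) >= 0); [lra |].
  apply H. intros i Hi Hi2. rewrite orient_mirror. specialize (Hr i Hi Hi2). lra.
Qed.

Theorem lemma10 (c : point) (rho : R) (p q r : point) (vs : list point) :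
  0 < rho ->
  on_circle c rho p -> on_circle c rho r -> in_open_disk c rho q ->
  simple_path vs ->
  vtx vs 0 = p -> vtx vs (pred (length vs)) = r ->
  on_path vs q ->
  (forall x, on_path vs x -> on_circle c rho x -> x = p \/ x = r) ->
  (cw_turn p q r -> has_cw_vertex vs) /\ (ccw_turn p q r -> has_ccw_vertex vs).
Proof.
  intros _ Hp Hr Hq Hs E0 En Hqp HC. subst p r.
  assert (Hchord : chord_path c rho q (vtx vs) (length vs)).
  { unfold chord_path. repeat (split; [assumption |]). exact HC. }
  split; intros Hturn; apply NNPP; intros Hno.
  - assert (Hl : left_turning (vtx vs) (length vs)).
    { intros i Hi Hi2. apply Rnot_lt_ge. intro H. apply Hno. exists i. auto. }
    assert (H := left_turning_chord_side _ _ _ _ _ Hchord Hl). unfold cw_turn in Hturn. lra.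
  - assert (H := right_turning_chord_side _ _ _ _ _ Hchord).
    assert (Hccw : orient (vtx vs O) q (vtx vs (pred (length vs))) <= 0).
    { apply H. intros i Hi Hi2. apply Rnot_lt_le. intro Hi3. apply Hno. exists i. auto. }
    unfold ccw_turn in Hturn. lra.
Qed.
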